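(* Let $L$ be an $r\times m$ matrix of integers of full rank $r$. There exist $K_L>0$ and $p_0$ depending only on $L$ such that for every prime $p\ge p_0$ and all $p$-measurable sets $A_1,\ldots,A_m\subset\mathbb{T}$, there exist $j_1/p,\ldots,j_K/p\in J(L,p)$ with $K\le K_L$ such that \[S_{L,\mathbb{T}}(A_1,\ldots,A_m)=\sum_{k=1}^{K}\lambda_k\,S_{L,\mathbb{Z}_p}\big(A_1'-j_k(1),\ldots,A_m'-j_k(m)\big),\] where $\lambda_k=p^{m-r}\mu_{L,\mathbb{T}}\big((j_k/p+[0,1/p)^m)\cap\ker_{\mathbb{T}}L\big)$.
   Context: $\mathbb{T}=\mathbb{R}/\mathbb{Z}$, and $\mathbb{T}^m$ is identified with $[0,1)^m$ with coordinatewise addition mod 1. A set $A\subset\mathbb{T}$ is $p$-measurable if it is a union of intervals $[(x-1)/p,x/p)$, $x\in\{1,\ldots,p\}$. For a $p$-measurable $A$, $A'\subset\mathbb{Z}_p$ is defined by $1_{A'}(x)=1_A(x/p)$ (identifying $x\in\mathbb{Z}_p$ with $\{0,\ldots,p-1\}$). For a compact abelian group $G$, $\ker_G L=\{x\in G^m:Lx=0\}$ with normalized Haar probability measure $\mu_{L,G}$, and $S_{L,G}(B_1,\ldots,B_m)=\mu_{L,G}\big((B_1\times\cdots\times B_m)\cap\ker_G L\big)$; for $G=\mathbb{Z}_p$ this is the proportion of elements of $\ker_{\mathbb{Z}_p}L$ lying in $B_1\times\cdots\times B_m$. For $j\in\mathbb{Z}_p^m$ with coordinates $j(i)\in\{0,\ldots,p-1\}$,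 $j/p=(j(1)/p,\ldots,j(m)/p)\in\mathbb{T}^m$; $\Lambda=\{j/p:j\in\mathbb{Z}_p^m\}$ and $J(L,p)=\{j/p\in\Lambda:\ \mu_{L,\mathbb{T}}\big((j/p+[0,1/p)^m)\cap\ker_{\mathbb{T}}L\big)>0\}$. *)

From HB Require Import structures.
From mathcomp Require Import all_boot all_order all_algebra.
From mathcomp Require Import all_classical all_reals all_analysis.
Set Implicit Arguments. Unset Strict Implicit. Unset Printing Implicit Defensive.
Import Order.TTheory GRing.Theory Num.Theory.
Import numFieldNormedType.Exports.
Local Open Scope classical_set_scope.
Local Open Scope ring_scope.

(* T^m is modelled as [0,1)^m inside R^m = 'rV[R]_m; addition mod 1
   is coordinatewise x + y - floor (x + y). *)

Notation borelRv R m := (g_sigma_algebraType (@open 'rV[R]_m)).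

Definition kerT (R : realType) (r m : nat) (L : 'M[int]_(r, m)) : set 'rV[R]_m :=
  [set x | (forall i, 0 <= x ord0 i < 1) /\
           forall a : 'I_r, exists z : int,
             \sum_(i < m) (L a i)%:~R * x ord0 i = z%:~R].
Arguments kerT R {r m} L.

Definition torus_add (R : realType) (m : nat) (y x : 'rV[R]_m) : 'rV[R]_m :=
  \row_i (x ord0 i + y ord0 i - (Num.floor (x ord0 i + y ord0 i))%:~R).

(* mu is the normalized Haar probability measure of ker_T L:
   a Borel probability concentrated on ker_T L and invariant under
   translations (mod 1) by elements of ker_T L.  By uniqueness of Haar
   measure, such a mu exists and is unique. *)
Definition is_haar_kerT (R : realType) (r m : nat) (L : 'M[int]_(r, m))
    (mu : probability (borelRv R m) R) : Prop :=
  mu (kerT R L) = 1%E /\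
  forall y : 'rV[R]_m, kerT R L y ->
    forall B : set (borelRv R m), measurable B ->
      mu (torus_add y @^-1` B) = mu B.

Definition S_T (R : realType) (r m : nat) (L : 'M[int]_(r, m))
    (mu : probability (borelRv R m) R) (B : 'I_m -> set R) : \bar R :=
  mu ([set x : 'rV[R]_m | forall i, B i (x ord0 i)] `&` kerT R L).

Definition p_measurable (R : realType) (p : nat) (A : set R) : Prop :=
  exists X : {set 'I_p},
    A = [set t | exists x : 'I_p, x \in X /\
                 (x%:R / p%:R <= t /\ t < (x.+1)%:R / p%:R)].

Definition discretize (R : realType) (p : nat) (A : set R) : {set 'I_p} :=
  [set x : 'I_p | `[< A (x%:R / p%:R) >]].
Arguments discretize {R} p A.

Definition zp_shift (p : nat) (B : {set 'I_p}) (c : 'I_p) : {set 'I_p} :=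
  [set x : 'I_p | [exists y in B, nat_of_ord y == ((nat_of_ord x + nat_of_ord c) %% p)%N]].

Definition kerZp (p r m : nat) (L : 'M[int]_(r, m)) : {set {ffun 'I_m -> 'I_p}} :=
  [set x : {ffun 'I_m -> 'I_p} |
     [forall a : 'I_r, (p%:Z %| \sum_(i < m) L a i * (x i)%:Z)%Z]].

Definition S_Zp (R : realType) (p r m : nat) (L : 'M[int]_(r, m))
    (B : 'I_m -> {set 'I_p}) : R :=
  (#|[set x in kerZp p L | [forall i, x i \in B i]]|)%:R / (#|kerZp p L|)%:R.

Definition pbox (R : realType) (p m : nat) (j : 'I_m -> 'I_p) : set 'rV[R]_m :=
  [set x | forall i, (j i)%:R / p%:R <= x ord0 i /\ x ord0 i < (j i).+1%:R / p%:R].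
Arguments pbox R {p m} j.

Definition box_mass (R : realType) (p r m : nat) (L : 'M[int]_(r, m))
    (mu : probability (borelRv R m) R) (j : 'I_m -> 'I_p) : \bar R :=
  mu (pbox R j `&` kerT R L).

Definition in_J (R : realType) (p r m : nat) (L : 'M[int]_(r, m))
    (mu : probability (borelRv R m) R) (j : 'I_m -> 'I_p) : Prop :=
  (0 < box_mass L mu j)%E.
Arguments is_haar_kerT {R r m} L mu.
Arguments S_T {R r m} L mu B.
Arguments S_Zp {R} p {r m} L B.
Arguments box_mass {R p r m} L mu j.
Arguments in_J {R p r m} L mu j.

From HB Require Import structures.
From mathcomp Require Import all_boot all_order all_algebra.
From mathcomp Require Import all_classical all_reals all_analysis.
Import Order.TTheory GRing.Theory Num.Theory.
Import numFieldNormedType.Exports.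
Local Open Scope classical_set_scope.
Local Open Scope ring_scope.
From mathcomp Require Import mxabelem.
From mathcomp Require Import ring lra zify.

Set Implicit Arguments.
Unset Strict Implicit.

(* S_T(A) is the sum of the masses mu(B_j ∩ ker_T L) of the boxes
   B_j = j/p + [0,1/p)^m with j in A'_1 × ... × A'_m.  For x in ker_{Z_p} L the
   point x/p lies in ker_T L, and translating by it carries B_j ∩ ker_T L onto
   B_{j+x} ∩ ker_T L; by Haar invariance the mass of B_j therefore depends only
   on the residue L j mod p.  If B_j meets ker_T L then (L j)_a ≡ -n_a mod p with
   |n_a| <= sum_i |L_ai| <= C, so at most (2C+1)^r residues carry mass.  The boxes
   of the class of a representative j_k contribute
   #{x in ker_{Z_p} L : j_k + x in A'} · mass(B_{j_k})
     = p^(m-r) S_{L,Z_p}(A' - j_k) · mass(B_{j_k}),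
   because |ker_{Z_p} L| = p^(m-r) as soon as p exceeds the absolute value of a
   nonzero r × r minor of L. *)

(** * Cells of the grid (1/p)Z *)

Definition cell (R : realType) (p : nat) (t : R) (y : nat) : Prop :=
  y%:R / p%:R <= t /\ t < y.+1%:R / p%:R.

Section grid_cells.
Variables (R : realType) (p : nat).
Hypothesis p_gt0 : (0 < p)%N.
Local Notation cell := (@cell R p).

Let p_neq0 : (p%:R : R) != 0. Proof. by rewrite pnatr_eq0 -lt0n. Qed.
Let pV_gt0 : 0 < (p%:R : R)^-1. Proof. by rewrite invr_gt0 ltr0n. Qed.

Lemma cell_uniq {t y z} : cell t y -> cell t z -> y = z.
Proof.
move=> [ylo yhi] [zlo zhi].
have y_lt : (y < z.+1)%N by rewrite -(ltr_nat R) -(ltr_pM2r pV_gt0) (le_lt_trans ylo zhi).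
have z_lt : (z < y.+1)%N by rewrite -(ltr_nat R) -(ltr_pM2r pV_gt0) (le_lt_trans zlo yhi).
by apply/eqP; rewrite eqn_leq -ltnS y_lt -ltnS z_lt.
Qed.

Lemma cell_exists t : 0 <= t < 1 -> exists y : 'I_p, cell t y.
Proof.
move=> /andP[t_ge0 t_lt1]; have p_gt0R : 0 < (p%:R : R) by rewrite ltr0n.
set f := Num.floor (t * p%:R).
have f_ge0 : 0 <= f by rewrite floor_ge0 mulr_ge0 // ltW.
have fE : (`|f|%N%:R : R) = f%:~R by rewrite natr_absz ger0_norm.
have f_lt : (`|f| < p)%N.
  rewrite -(ltr_nat R) fE; apply: le_lt_trans (floor_le _) _.
  by rewrite -[X in _ < X]mul1r ltr_pM2r.
have f1E : ((`|f|%N).+1%:R : R) = (f + 1)%:~R by rewrite -addn1 natrD fE rmorphD.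
exists (Ordinal f_lt); rewrite /cell /= fE f1E.
rewrite !ler_pdivrMr // !ltr_pdivlMr //; split; [exact: floor_le | exact: floorD1_gt].
Qed.

Lemma cell_nat (y : nat) : cell (y%:R / p%:R) y.
Proof. by split => //; rewrite ltr_pM2r // ltr_nat. Qed.

Lemma cell_ge0_lt1 {t} {y : nat} : (y < p)%N -> cell t y -> 0 <= t < 1.
Proof.
move=> y_lt [ylo yhi]; apply/andP; split.
  by apply: le_trans ylo; rewrite divr_ge0.
by apply: lt_le_trans yhi _; rewrite ler_pdivrMr ?ltr0n // mul1r ler_nat.
Qed.

Lemma cellDn {t a} k : cell t a -> cell (t + k%:R / p%:R) (a + k).
Proof.
by case=> lo hi; split; rewrite -?addSn natrD mulrDl ?lerD2r ?ltrD2r.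
Qed.

Lemma cell_subn t q c : cell t (q * p + c) -> cell (t - q%:R) c.
Proof.
have qE c' : ((q * p + c')%:R / p%:R : R) = q%:R + c'%:R / p%:R.
  by rewrite natrD mulrDl natrM mulfK.
by case=> lo hi; split; rewrite ?lerBrDl ?ltrBlDl -qE // addnS.
Qed.


Lemma floor_cell {s} {c} {n : int} : (c < p)%N -> cell (s - n%:~R) c ->
  Num.floor s = n.
Proof.
move=> c_lt /(cell_ge0_lt1 c_lt) /andP[lo hi].
by apply: floor_def; rewrite -subr_ge0 lo rmorphD /= -ltrBlDl hi.
Qed.

Lemma cell_frac s c : cell s c -> cell (s - (Num.floor s)%:~R) (c %% p).
Proof.
rewrite {1}(divn_eq c p) => /cell_subn sc.
by rewrite (floor_cell (n := (c %/ p)%:Z) (ltn_pmod c p_gt0) sc).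
Qed.

Lemma cell_fracD {t} {a} (b : nat) : cell t a ->
  cell ((t + b%:R / p%:R) - (Num.floor (t + b%:R / p%:R))%:~R) ((a + b) %% p).
Proof. by move=> /(cellDn b) /cell_frac. Qed.

Lemma cell_fracDK t (a b : 'I_p) : 0 <= t < 1 ->
  cell ((t + b%:R / p%:R) - (Num.floor (t + b%:R / p%:R))%:~R) ((a + b) %% p) ->
  cell t a.
Proof.
move=> /cell_exists [a' ta'] /(cell_uniq (cell_fracD b ta'))/eqP.
rewrite eqn_modDr !modn_small // => /eqP a'E.
by have <- : a' = a by exact: val_inj.
Qed.

End grid_cells.
Arguments cell_nat {R p} p_gt0 y.

Lemma p_measurable_cell (R : realType) p (A : set R) (y : 'I_p) t :
  p_measurable p A -> cell p t y -> (A t <-> y \in discretize p A).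
Proof.
move=> [X ->] ty; have p_gt0 : (0 < p)%N := leq_ltn_trans (leq0n y) (ltn_ord y).
rewrite inE; split.
- case=> x [xX tx]; have yx : y = x := ord_inj (cell_uniq p_gt0 ty tx).
  by subst y; apply/asboolP; exists x; split => //; exact: cell_nat.
- case/asboolP=> x [xX yx].
  have y_x : y = x := ord_inj (cell_uniq p_gt0 (cell_nat p_gt0 y) yx).
  by subst y; exists x.
Qed.

(** * Borel sets of R^m *)

Lemma measurable_forall_fin d (T : measurableType d) (I : finType)
    (S : I -> set T) :
  (forall i, measurable (S i)) -> measurable [set x | forall i, S i x].
Proof.
move=> mS; have -> : [set x | forall i, S i x] = \bigcap_(i in [set: I]) S i.
  by apply/seteqP; split=> x /= h i //; exact: h.
by apply: fin_bigcap_measurable => //; exact: finite_setT.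
Qed.

Lemma measurable_exists_int d (T : measurableType d) (S : int -> set T) :
  (forall n, measurable (S n)) -> measurable [set x | exists n, S n x].
Proof.
move=> mS; have -> : [set x | exists n, S n x] = \bigcup_n S n.
  by apply/seteqP; split=> x /= [n]; exists n.
exact: countable_bigcupT_measurable.
Qed.

Section borel_rV.
Variables (R : realType) (m : nat).
Local Notation T := (borelRv R m).

Lemma measurable_open_rV (U : set 'rV[R]_m) : open U -> measurable (U : set T).
Proof. exact: sub_sigma_algebra. Qed.

Lemma measurable_closed_rV (U : set 'rV[R]_m) :
  closed U -> measurable (U : set T).
Proof. by move=> /closed_openC/measurable_open_rV/measurableC; rewrite setCK. Qed.

Lemma measurable_lt_continuous (f : 'rV[R]_m -> R) c :
  continuous f -> measurable ([set x | f x < c] : set T).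
Proof.
move=> cf; have -> : [set x | f x < c] = f @^-1` [set y | y < c] by [].
apply: measurable_open_rV; apply: open_comp;
  [by move=> x _; exact: cf | exact: open_lt c].
Qed.

Lemma measurable_ge_continuous (f : 'rV[R]_m -> R) c :
  continuous f -> measurable ([set x | c <= f x] : set T).
Proof.
move=> cf; have -> : [set x | c <= f x] = f @^-1` [set y | c <= y] by [].
apply: measurable_closed_rV; apply: preimage_closed;
  [by move=> x _; exact: cf | exact: closed_ge c].
Qed.

Lemma measurable_eq_continuous (f : 'rV[R]_m -> R) c :
  continuous f -> measurable ([set x | f x = c] : set T).
Proof.
move=> cf; have -> : [set x | f x = c] = f @^-1` [set y | y = c] by [].
apply: measurable_closed_rV; apply: preimage_closed;
  [by move=> x _; exact: cf | exact: closed_eq c].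
Qed.

Lemma continuous_bigsum (I : Type) (s : seq I) (g : I -> 'rV[R]_m -> R) :
  (forall i, continuous (g i)) -> continuous (fun x => \sum_(i <- s) g i x).
Proof.
move=> cg; elim: s => [|a s IHs].
  under eq_fun do rewrite big_nil; exact: cst_continuous.
under eq_fun do rewrite big_cons.
by move=> x; apply: (@continuousD _ R^o); [exact: cg | exact: IHs].
Qed.

Lemma continuous_lincomb (c : 'I_m -> R) :
  continuous (fun x : 'rV[R]_m => \sum_i c i * x ord0 i).
Proof.
apply: continuous_bigsum => i x.
apply: (@continuousM R _ (fun=> c i) (fun x : 'rV[R]_m => x ord0 i)).
  exact: cst_continuous.
exact: coord_continuous.
Qed.

Lemma measurable_cell_continuous (f : 'rV[R]_m -> R) p y :
  continuous f -> measurable ([set z | cell p (f z) y] : set T).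
Proof.
move=> cf; have -> : [set z | cell p (f z) y] =
    [set z | y%:R / p%:R <= f z] `&` [set z | f z < y.+1%:R / p%:R] by [].
by apply: measurableI; [exact: measurable_ge_continuous | exact: measurable_lt_continuous].
Qed.

End borel_rV.

Lemma probability_setI_full (R : realType) d (U : measurableType d)
    (P : probability U R) (A K : set U) :
  measurable A -> measurable K -> P K = 1%E -> P (A `&` K) = P A.
Proof.
move=> mA mK PK1; have PKc : P (~` K) = 0%E.
  by rewrite probability_setC // PK1 subee.
have PAK : P (A `\` K) = 0%E.
  by apply: (subset_measure0 (measurableD mA mK) (measurableC mK) _ PKc) => x [].
transitivity (P (A `\` K) + P (A `&` K))%E; first by rewrite PAK add0e.
exact/esym/measureDI.
Qed.

(** * Boxes and the kernel of L on the torus *)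

Section real_kernel.
Variables (R : realType) (r m : nat) (L : 'M[int]_(r, m)).
Local Notation T := (borelRv R m).

Definition Lrow (a : 'I_r) (z : 'rV[R]_m) : R := \sum_i (L a i)%:~R * z ord0 i.

Definition L_integral : set 'rV[R]_m :=
  [set z | forall a, exists w : int, Lrow a z = w%:~R].

Lemma measurable_L_integral : measurable (L_integral : set T).
Proof.
apply: (@measurable_forall_fin _ _ _ (fun a => [set z : T | exists w : int, Lrow a z = w%:~R])).
move=> a; apply: (@measurable_exists_int _ _ (fun w => [set z : T | Lrow a z = w%:~R])) => w.
by apply: measurable_eq_continuous; exact: continuous_lincomb.
Qed.

Lemma measurable_kerT : measurable (kerT R L : set T).
Proof.
have -> : kerT R L = [set z : 'rV[R]_m | forall i, 0 <= z ord0 i < 1] `&` L_integral by [].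
apply: measurableI; last exact: measurable_L_integral.
apply: (@measurable_forall_fin _ _ _ (fun i => [set z : T | 0 <= z ord0 i < 1])) => i.
have -> : [set z : T | 0 <= z ord0 i < 1] =
    [set z | 0 <= z ord0 i] `&` [set z | z ord0 i < 1].
  by apply/seteqP; split => z /= => [/andP[] | [-> ->]].
by apply: measurableI;
  [apply: measurable_ge_continuous | apply: measurable_lt_continuous];
  exact: coord_continuous.
Qed.

Lemma measurable_pbox p (j : 'I_m -> 'I_p) : measurable (pbox R j : set T).
Proof.
apply: (@measurable_forall_fin _ _ _ (fun i => [set z : T | cell p (z ord0 i) (j i)])) => i.
by apply: measurable_cell_continuous; exact: coord_continuous.
Qed.

Lemma measurable_pbox_kerT p (j : 'I_m -> 'I_p) :
  measurable (pbox R j `&` kerT R L : set T).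
Proof. exact: (measurableI _ _ (measurable_pbox j) measurable_kerT). Qed.

Lemma Lrow_torus_add (y z : 'rV[R]_m) a :
  Lrow a (torus_add y z) = Lrow a z + Lrow a y -
     (\sum_i L a i * Num.floor (z ord0 i + y ord0 i))%:~R.
Proof.
rewrite /Lrow rmorph_sum -big_split -sumrB /=; apply: eq_bigr => i _.
by rewrite mxE rmorphM /= mulrBr mulrDr.
Qed.

Lemma L_integral_torus_add (y z : 'rV[R]_m) :
  L_integral y -> (L_integral (torus_add y z) <-> L_integral z).
Proof.
move=> yL; split => zL a; have [wy wyE] := yL a; have [w wE] := zL a;
  rewrite Lrow_torus_add ?wyE in wE *.
- exists (w - wy + \sum_i L a i * Num.floor (z ord0 i + y ord0 i)).
  by rewrite !rmorphD /= -wE rmorphN /=; ring.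
- exists (w + wy - \sum_i L a i * Num.floor (z ord0 i + y ord0 i)).
  by rewrite wE !rmorphB /= rmorphD.
Qed.

Lemma S_T_sum_box_mass p (mu : probability T R) (A : 'I_m -> set R) :
  (0 < p)%N -> (forall i, p_measurable p (A i)) ->
  S_T L mu A = (\sum_(j : {ffun 'I_m -> 'I_p} | [forall i, j i \in discretize p (A i)])
                 box_mass L mu j)%E.
Proof.
move=> p_gt0 A_pm; rewrite /S_T.
set P := [set j : {ffun 'I_m -> 'I_p} | [forall i, j i \in discretize p (A i)]]%SET.
pose F (k : 'I_#|P|) : set T := pbox R (enum_val k : {ffun 'I_m -> 'I_p}) `&` kerT R L.
have -> : [set x : T | forall i, A i (x ord0 i)] `&` kerT R L =
    \big[setU/set0]_(k < #|P|) F k.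
  rewrite -bigcup_seq; apply/seteqP; split=> x.
  - case=> Ax xK.
    have [jf xjf] := @fin_all_exists _ (fun _ => 'I_p)
      (fun i (y : 'I_p) => cell p (x ord0 i) y) (fun i => cell_exists p_gt0 (xK.1 i)).
    have jP : [ffun i => jf i] \in P.
      rewrite inE; apply/forallP => i; rewrite ffunE.
      exact/(p_measurable_cell (A_pm i) (xjf i)).
    exists (enum_rank_in jP [ffun i => jf i]); first exact: mem_index_enum.
    by rewrite /F enum_rankK_in //; split; [move=> i; rewrite ffunE; exact: xjf | exact: xK].
  - case=> k _ [xk xK]; split => // i.
    have := enum_valP k; rewrite inE => /forallP /(_ i).
    by move/(p_measurable_cell (A_pm i) (xk i)).
transitivity (\sum_(j in P) box_mass L mu j)%E; last by apply: eq_bigl => j; rewrite inE.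
rewrite (big_enum_val (fun j : {ffun _ -> _} => box_mass L mu j)) measure_bigsetU_ord //.
- by move=> k; exact: measurable_pbox_kerT.
- move=> k1 k2 _ _ [x [[xk1 _] [xk2 _]]]; apply/enum_val_inj/ffunP => i.
  exact: ord_inj (cell_uniq p_gt0 (xk1 i) (xk2 i)).
Qed.

Section grid_translation.
Variable p : nat.
Hypothesis p_gt0 : (0 < p)%N.

Definition grid_point (x : 'I_m -> 'I_p) : 'rV[R]_m := \row_i ((x i)%:R / p%:R).

Lemma grid_point_kerT (x : 'I_m -> 'I_p) :
  (forall a, (p%:Z %| \sum_i L a i * (x i)%:Z)%Z) -> kerT R L (grid_point x).
Proof.
move=> x_ker; split.
  move=> i; rewrite mxE.
  exact: (@cell_ge0_lt1 R p p_gt0 _ _ (ltn_ord (x i)) (cell_nat p_gt0 (x i))).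
move=> a; case/dvdzP: (x_ker a) => q qE; exists q; change (Lrow a (grid_point x) = q%:~R).
have p_neq0 : (p%:R : R) != 0 by rewrite pnatr_eq0 -lt0n.
have -> : Lrow a (grid_point x) = (\sum_i L a i * (x i)%:Z)%:~R / p%:R.
  rewrite rmorph_sum mulr_suml; apply: eq_bigr => i _.
  by rewrite mxE rmorphM /= mulrA -pmulrn.
by rewrite qE rmorphM /= -pmulrn mulfK.
Qed.

(* [torus_add y] is not continuous, so the measurability of this preimage is read
   off an explicit description of it. *)
Lemma measurable_torus_add_preimage (y : 'rV[R]_m) (j : 'I_m -> 'I_p) :
  L_integral y -> measurable (torus_add y @^-1` (pbox R j `&` kerT R L) : set T).
Proof.
move=> yL.
have -> : torus_add y @^-1` (pbox R j `&` kerT R L) =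
    [set z : 'rV[R]_m | forall i, exists n : int, cell p (z ord0 i + (y ord0 i - n%:~R)) (j i)]
    `&` L_integral.
  apply/seteqP; split => z /=.
  - case=> zj [_ zL]; split; last exact/(L_integral_torus_add z yL).
    by move=> i; exists (Num.floor (z ord0 i + y ord0 i)); have := zj i; rewrite mxE addrA.
  - case=> zj zL.
    have zj' i : cell p (torus_add y z ord0 i) (j i).
      have [n] := zj i; rewrite addrA => zn.
      by rewrite mxE (floor_cell p_gt0 (ltn_ord (j i)) zn).
    split => //; split; last exact/(L_integral_torus_add z yL).
    by move=> i; exact: (cell_ge0_lt1 p_gt0 (ltn_ord (j i)) (zj' i)).
apply: measurableI; last exact: measurable_L_integral.
apply: (@measurable_forall_fin _ _ _ (fun i => [set z : T | exists n : int,
  cell p (z ord0 i + (y ord0 i - n%:~R)) (j i)])) => i.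
apply: (@measurable_exists_int _ _ (fun n : int => [set z : T |
  cell p (z ord0 i + (y ord0 i - n%:~R)) (j i)])) => n.
apply: measurable_cell_continuous => z.
by apply: (@continuousD _ R^o _ (fun z : 'rV[R]_m => z ord0 i) (fun=> y ord0 i - n%:~R));
  [exact: coord_continuous | exact: cst_continuous].
Qed.

Lemma torus_add_grid_point_box (x j0 j : 'I_m -> 'I_p) :
  (forall i, nat_of_ord (j i) = ((j0 i + x i) %% p)%N) ->
  kerT R L (grid_point x) ->
  torus_add (grid_point x) @^-1` (pbox R j `&` kerT R L) `&` kerT R L =
  pbox R j0 `&` kerT R L.
Proof.
move=> jE yK; apply/seteqP; split => z [zP zK]; split => //.
- case: zP => zj _ i; apply: (cell_fracDK p_gt0 (b := x i) (zK.1 i)).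
  by have := zj i; rewrite !mxE jE.
- have zj i : cell p (torus_add (grid_point x) z ord0 i) (j i).
    by rewrite !mxE jE; exact: (cell_fracD p_gt0 _ (zP i)).
  split; first exact: zj.
  split; last by apply/(L_integral_torus_add z yK.2); case: zK.
  by move=> i; exact: (cell_ge0_lt1 p_gt0 (ltn_ord (j i)) (zj i)).
Qed.

Lemma box_mass_shift (mu : probability T R) (x j0 j : 'I_m -> 'I_p) :
  is_haar_kerT L mu ->
  (forall a, (p%:Z %| \sum_i L a i * (x i)%:Z)%Z) ->
  (forall i, nat_of_ord (j i) = ((j0 i + x i) %% p)%N) ->
  box_mass L mu j = box_mass L mu j0.
Proof.
move=> [mu_ker mu_inv] x_ker jE; have yK := grid_point_kerT x_ker.
rewrite /box_mass -(torus_add_grid_point_box jE yK) [RHS]probability_setI_full //.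
- exact: (esym (mu_inv _ yK _ (measurable_pbox_kerT j))).
- exact: (measurable_torus_add_preimage _ yK.2).
- exact: measurable_kerT.
Qed.

End grid_translation.
End real_kernel.

(** * Reduction modulo p *)

Lemma Fp_intr_eq0 (p : nat) (z : int) : prime p ->
  ((z%:~R : 'F_p) == 0) = (p%:Z %| z)%Z.
Proof.
move=> p_prime; have natr_eq0 (n : nat) : ((n%:R : 'F_p) == 0) = (p %| n)%N.
  apply/eqP/idP => [n0 | /eqP pn].
    by have := val_Fp_nat p_prime n; rewrite n0 => /esym/eqP.
  by apply/val_inj; rewrite /= val_Fp_nat.
case: z => n; first by rewrite -pmulrn natr_eq0.
by rewrite NegzE mulrNz oppr_eq0 -pmulrn natr_eq0.
Qed.

(* A nonzero r x r minor of [L] stays a unit modulo every prime above its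
   absolute value. *)
Lemma rank_map_Fp_large r m (L : 'M[int]_(r, m)) :
  \rank (map_mx (intr : int -> rat) L) = r ->
  exists D : nat, forall p, prime p -> (D < p)%N ->
    \rank (map_mx (intr : int -> 'F_p) L) = r.
Proof.
move=> rankL; have LT_full : row_full (map_mx (intr : int -> rat) L)^T.
  by rewrite /row_full mxrank_tr rankL.
set f := fullrankfun LT_full; set B : 'M[int]_r := rowsub f L^T.
have BE (K : fieldType) : map_mx (intr : int -> K) B = rowsub f (map_mx intr L)^T.
  by apply/matrixP => i j; rewrite !mxE.
have detB_neq0 : \det B != 0.
  have := fullrowsub_unit LT_full; rewrite -/f -BE unitmxE det_map_mx unitfE.
  by apply: contra => /eqP ->; rewrite rmorph0.
exists `|\det B|%N => p p_prime p_large; apply/eqP.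
rewrite eqn_leq rank_leq_row /=.
have B_unit : map_mx (intr : int -> 'F_p) B \in unitmx.
  rewrite unitmxE det_map_mx unitfE Fp_intr_eq0 //; apply/negP => /dvdn_leq.
  by rewrite absz_gt0 detB_neq0 leqNgt p_large => /(_ isT).
have := mxrank_unit B_unit; rewrite BE => rankB.
rewrite -{1}rankB -[X in (_ <= X)%N]mxrank_tr.
exact/mxrankS/rowsub_sub.
Qed.

(* For [z] in the box, [p z_i - j_i] lies in [0,1), so the integer
   [p (L z)_a - (L j)_a] is bounded by [sum_i |L_ai|]. *)
Lemma box_kerT_residue (R : realType) r m (L : 'M[int]_(r, m)) p
    (j : 'I_m -> 'I_p) (z : 'rV[R]_m) :
  pbox R j z -> kerT R L z ->
  forall a, exists n : int, (`|n| <= \sum_i `|L a i|)%N /\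
    (p%:Z %| \sum_i L a i * (j i)%:Z + n)%Z.
Proof.
move=> zj [_ zL] a; have [w wE] := zL a.
set S := \sum_i L a i * (j i)%:Z.
exists (p%:Z * w - S); split; last by rewrite addrC subrK dvdz_mulr.
have frac_ge0_lt1 i : 0 <= p%:R * z ord0 i - (j i)%:R < 1.
  have p_gt0 : 0 < (p%:R : R) by rewrite ltr0n (leq_ltn_trans (leq0n _) (ltn_ord (j i))).
  have [lo hi] := zj i; rewrite ler_pdivrMr // in lo; rewrite ltr_pdivlMr // -natr1 in hi.
  apply/andP; split; lra.
have nE : ((p%:Z * w - S)%:~R : R) = \sum_i (L a i)%:~R * (p%:R * z ord0 i - (j i)%:R).
  rewrite rmorphB rmorphM /= -wE rmorph_sum mulr_sumr -sumrB; apply: eq_bigr => i _.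
  by rewrite rmorphM /= -pmulrn mulrBr mulrCA.
rewrite -(ler_nat R) natr_absz intr_norm nE natr_sum.
apply: (le_trans (ler_norm_sum _ _ _)); apply: ler_sum => i _.
have /andP[d_ge0 d_lt1] := frac_ge0_lt1 i.
rewrite normrM natr_absz intr_norm -[X in _ <= X]mulr1 ler_wpM2l //.
by rewrite ger0_norm // ltW.
Qed.

Section residues.
Variables (r m : nat) (L : 'M[int]_(r, m)) (p' : nat).
Local Notation p := p'.+1.
Hypothesis p_prime : prime p.
Local Notation F := 'F_p.
Local Notation grid := {ffun 'I_m -> 'I_p}.

Definition Fp_of_grid (x : grid) : 'rV[F]_m := \row_i ((x i)%:R : F).

Definition residue (x : grid) : 'rV[F]_r := Fp_of_grid x *m (map_mx intr L)^T.

Lemma Fp_of_grid_inj : injective Fp_of_grid.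
Proof.
move=> x y /matrixP xy; apply/ffunP => i; have := xy 0 i; rewrite !mxE.
by move/(congr1 val); rewrite /= !val_Fp_nat // !modn_small // => /val_inj.
Qed.

Lemma Fp_of_gridD x y : Fp_of_grid (x + y) = Fp_of_grid x + Fp_of_grid y.
Proof.
by apply/rowP => i; rewrite !mxE ffunE /= -natrD -[in RHS](Fp_nat_mod p_prime).
Qed.

Lemma residueD x y : residue (x + y) = residue x + residue y.
Proof. by rewrite /residue Fp_of_gridD mulmxDl. Qed.

Lemma residueB x y : residue (x - y) = residue x - residue y.
Proof. by rewrite -[in RHS](subrK y x) [in RHS]residueD addrK. Qed.

Lemma residue_entry x a : residue x 0 a = (\sum_i L a i * (x i)%:Z)%:~R.
Proof.
rewrite !mxE rmorph_sum; apply: eq_bigr => i _.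
by rewrite !mxE rmorphM /= mulrC -pmulrn.
Qed.

Lemma kerZp_residue x : (x \in kerZp p L) = (residue x == 0).
Proof.
rewrite inE; apply/forallP/eqP => [x_ker | x0 a].
  by apply/rowP => a; rewrite residue_entry mxE; apply/eqP; rewrite Fp_intr_eq0.
by rewrite -Fp_intr_eq0 // -residue_entry x0 mxE.
Qed.

Lemma card_kerZp : \rank (map_mx (intr : int -> F) L) = r ->
  #|kerZp p L| = (p ^ (m - r))%N.
Proof.
move=> rankL; rewrite -(card_imset _ Fp_of_grid_inj).
have -> : Fp_of_grid @: kerZp p L = rowg (kermx (map_mx intr L)^T).
  apply/setP => v; rewrite mem_rowg sub_kermx; apply/imsetP/idP => [[x x_ker ->] | v0].
    by rewrite -kerZp_residue.
  have vE : Fp_of_grid [ffun i => cast_ord (Fp_cast p_prime) (v 0 i)] = v.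
    by apply/rowP => i; rewrite !mxE ffunE /= natr_Zp.
  by exists [ffun i => cast_ord (Fp_cast p_prime) (v 0 i)]; rewrite // kerZp_residue /residue vE.
by rewrite card_rowg mxrank_ker mxrank_tr rankL card_Fp.
Qed.

Lemma S_Zp_shift (R : realType) (B : 'I_m -> {set 'I_p}) (j0 : grid) :
  @S_Zp R p r m L (fun i => zp_shift (B i) (j0 i)) =
  (#|[set x in kerZp p L | [forall i, (j0 + x) i \in B i]]%SET|)%:R / (#|kerZp p L|)%:R.
Proof.
rewrite /S_Zp; congr (_%:R / _); apply: eq_card => x; rewrite !inE; congr (_ && _).
apply: eq_forallb => i; rewrite inE; apply/existsP/idP => [[y /andP[yB /eqP yE]] | jxB].
  by rewrite (_ : (j0 + x) i = y) //; apply/val_inj; rewrite ffunE /= yE addnC.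
by exists ((j0 + x) i); rewrite jxB /= ffunE addnC.
Qed.

(* The residues [(-n_a)_a] with [|n_a| <= C], indexed by [c_a = n_a + C] in [0, 2C]. *)
Definition small_residues (C : nat) : {set 'rV[F]_r} :=
  [set \row_a ((C%:Z - (c a)%:Z)%:~R : F) | c : {ffun 'I_r -> 'I_C.*2.+1}].

Lemma card_small_residues C : (#|small_residues C| <= C.*2.+1 ^ r)%N.
Proof. by rewrite (leq_trans (leq_imset_card _ _)) // card_ffun !card_ord. Qed.

Lemma residue_small (R : realType) (mu : probability (borelRv R m) R) C (j : grid) :
  (forall a, (\sum_i `|L a i| <= C)%N) ->
  (0 < box_mass L mu j)%E -> residue j \in small_residues C.
Proof.
move=> C_ge j_pos.
have [z [zj zK]] : exists z, (pbox R j `&` kerT R L) z.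
  apply/not_existsP => nz; move: j_pos; rewrite /box_mass.
  by rewrite (_ : _ `&` _ = set0) ?measure0 ?ltxx //; apply/seteqP; split => // z /nz.
have [n nP] := @fin_all_exists _ (fun _ => int) _ (box_kerT_residue zj zK).
apply/imsetP; exists [ffun a => inord `|n a + C%:Z|] => //.
apply/rowP => a; have [n_le pn] := nP a; have sum_le := C_ge a.
rewrite residue_entry mxE ffunE inordK; last by rewrite -addnn; lia.
rewrite gez0_abs; last by lia.
move: pn; rewrite -Fp_intr_eq0 // rmorphD /= addr_eq0 => /eqP ->.
by rewrite -rmorphN /=; congr intmul; lia.
Qed.

End residues.
Arguments residue {r m} L {p'} x.

(** * Summing box masses over residue classes *)

Section residue_classes.
Variables (R : realType) (r m : nat) (L : 'M[int]_(r, m)).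
Variables (mu : probability (borelRv R m) R) (p' : nat).
Hypothesis mu_haar : is_haar_kerT L mu.
Local Notation p := p'.+1.
Hypothesis p_prime : prime p.
Local Notation grid := {ffun 'I_m -> 'I_p}.
Local Notation M j := (box_mass L mu (j : grid)).

Lemma box_mass_fin_num (j : grid) : M j \is a fin_num.
Proof.
rewrite ge0_fin_numE ?measure_ge0 // (le_lt_trans (probability_le1 _ _)) ?ltey //.
exact: measurable_pbox_kerT.
Qed.

Lemma box_mass_residue (j0 j : grid) : residue L j = residue L j0 -> M j = M j0.
Proof.
move=> jE; apply: (box_mass_shift _ (x := j - j0) mu_haar) => [//|a|i].
  by rewrite -Fp_intr_eq0 // -residue_entry residueB // jE subrr mxE.
by rewrite -{1}(subrK j0 j) addrC ffunE.
Qed.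

Lemma sum_box_mass_coset (P : pred grid) (j0 : grid) :
  (\sum_(j | P j && (residue L j == residue L j0)) M j)%E =
  ((#|[set x in kerZp p L | P (j0 + x)]%SET|)%:R%:E * M j0)%E.
Proof.
rewrite (reindex_inj (addrI j0)) /=.
rewrite (eq_bigl (mem [set x in kerZp p L | P (j0 + x)]%SET)); last first.
  move=> x; rewrite residueD // -subr_eq0 addrAC subrr add0r -kerZp_residue //.
  by rewrite andbC !inE.
rewrite (eq_bigr (fun=> M j0)); last first.
  move=> x /setIdP[]; rewrite kerZp_residue // => /eqP x0 _.
  by apply: box_mass_residue; rewrite residueD // x0 addr0.
by rewrite -[M j0](fineK (box_mass_fin_num j0)) sumEFin sumr_const -EFinM mulr_natl.
Qed.

Definition charged_residues : {set 'rV['F_p]_r} :=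
  residue L @: [set j : grid | (0 < M j)%E].

Definition class_rep (c : 'rV['F_p]_r) : grid :=
  odflt 0 [pick j : grid | (0 < M j)%E & residue L j == c].

Lemma class_repP c : c \in charged_residues ->
  (0 < M (class_rep c))%E /\ residue L (class_rep c) = c.
Proof.
case/imsetP => j; rewrite inE => j_pos ->; rewrite /class_rep.
by case: pickP => [j' /andP[j'_pos /eqP] | /(_ j)] //; rewrite j_pos eqxx.
Qed.

Lemma sum_box_mass_classes (P : pred grid) :
  (\sum_(j | P j) M j)%E =
  (\sum_(c in charged_residues)
     (#|[set x in kerZp p L | P (class_rep c + x)]%SET|)%:R%:E * M (class_rep c))%E.
Proof.
rewrite (bigID (fun j : grid => 0 < M j)%E) /= [X in (_ + X)%E]big1 ?adde0; last first.
  by move=> j /andP[_]; rewrite lt_def measure_ge0 andbT negbK => /eqP.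
rewrite (partition_big (residue L) (mem charged_residues)) /=; last first.
  by move=> j /andP[_ j_pos]; apply/imsetP; exists j; rewrite ?inE.
apply: eq_bigr => c /class_repP [rep_pos repE].
rewrite -(sum_box_mass_coset P (class_rep c)) repE; apply: eq_bigl => j.
have [jc | _] := eqVneq (residue L j) c; last by rewrite !andbF.
rewrite !andbT (box_mass_residue (j0 := class_rep c)) ?repE //.
by rewrite rep_pos andbT.
Qed.

Lemma sum_box_mass_S_Zp (B : 'I_m -> {set 'I_p}) :
  \rank (map_mx (intr : int -> 'F_p) L) = r ->
  (\sum_(j : grid | [forall i, j i \in B i]) M j)%E =
  (\sum_(c in charged_residues)
     ((p%:R ^+ (m - r) : R)%:E * M (class_rep c)) *
     (S_Zp p L (fun i => zp_shift (B i) (class_rep c i)))%:E)%E.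
Proof.
move=> rankL; rewrite sum_box_mass_classes; apply: eq_bigr => c _.
rewrite S_Zp_shift card_kerZp // -[M (class_rep c)](fineK (box_mass_fin_num _)).
rewrite -!EFinM natrX; congr EFin.
have p_neq0 : (p%:R : R) ^+ (m - r) != 0 by rewrite expf_neq0 // pnatr_eq0.
by rewrite mulrAC [p%:R ^+ _ * _]mulrC mulfVK.
Qed.

End residue_classes.

Theorem lemma2p5 (R : realType) (r m : nat) (L : 'M[int]_(r, m))
    (hrank : \rank (map_mx (intr : int -> rat) L) = r)
    (mu : probability (borelRv R m) R) (hmu : is_haar_kerT L mu) :
  exists (KL p0 : nat), (0 < KL)%N /\
    forall p : nat, prime p -> (p0 <= p)%N ->
    forall A : 'I_m -> set R, (forall i, p_measurable p (A i)) ->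
    exists (K : nat) (js : 'I_K -> ('I_m -> 'I_p)),
      (K <= KL)%N /\ (forall k, in_J L mu (js k)) /\
      S_T L mu A =
        (\sum_(k < K)
           ((p%:R ^+ (m - r) : R)%:E * box_mass L mu (js k)) *
           (S_Zp p L (fun i => zp_shift (discretize p (A i)) (js k i)))%:E)%E.
Proof.
have [D rank_Fp] := rank_map_Fp_large hrank.
pose C := (\max_a \sum_i `|L a i|)%N.
exists (C.*2.+1 ^ r)%N, D.+1; split; first by rewrite expn_gt0.
case=> [//|p'] p_prime p_large A A_pm.
pose G := charged_residues L mu p'.
exists #|G|, (fun k => class_rep L mu (enum_val k) : 'I_m -> 'I_p'.+1); split; last split.
- apply: (leq_trans _ (card_small_residues r p' C)).
  apply: subset_leq_card; apply/fintype.subsetP => c /imsetP[j]; rewrite inE => j_pos ->.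
  by apply: (residue_small p_prime _ j_pos) => a; exact: leq_bigmax.
- by move=> k; have [] := class_repP (enum_valP k).
- rewrite (S_T_sum_box_mass L mu (ltn0Sn p') A_pm) (sum_box_mass_S_Zp hmu p_prime).
    exact: big_enum_val.
  exact: rank_Fp.
Qed.
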